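(* Let $r$ be an odd prime and $q=2^m$ with $m\ge1$. Then $\Gamma L_1(1,q^r)=\Gamma L(1,q^r)\cap SL(r,q)$ acts transitively on $\mathbb{F}_{q^r}\setminus\{0\}$ if and only if $q=2$.
   Context: Regard $\mathbb{F}_{q^r}$ as an $r$-dimensional $\mathbb{F}_q$-vector space, so $GL(r,q)=GL_{\mathbb{F}_q}(\mathbb{F}_{q^r})$. Let $\alpha$ generate $\mathbb{F}_{q^r}^*$, let $\tau(z)=\alpha z$ and $\sigma(z)=z^q$. $\Gamma L(1,q^r)$ is the subgroup of $GL(r,q)$ generated by $\tau$ and $\sigma$, and $\Gamma L_1(1,q^r)$ is its intersection with $SL(r,q)$. *)

From HB Require Import structures.
From mathcomp Require Import all_boot all_order all_algebra all_fingroup all_field.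
Set Implicit Arguments. Unset Strict Implicit. Unset Printing Implicit Defensive.
Import GRing.Theory.
Local Open Scope ring_scope.

(* L is a finite field extension of the finite field F = F_q, viewed as an
   F-vector space of dimension \dim {:L}.  [finvect_type L] is the carrier of L
   equipped with its canonical finType (and field) structure, so that
   permutations of L form a finite group. *)
Section GammaL.
Variables (F : finFieldType) (L : fieldExtType F).
Local Notation T := (finvect_type L).

Definition Flinear_perm (p : {perm T}) : bool :=
  [forall a : F, forall x : T, forall y : T, p (a *: x + y) == a *: p x + p y].

Definition det_perm (p : {perm T}) : F :=
  \det (passmx.mxof (vbasis {:L}) (vbasis {:L}) (linfun (fun x : L => (p x : L)))).

Definition GLF : {set {perm T}} := [set p | Flinear_perm p].

Definition SLF : {set {perm T}} := [set p in GLF | det_perm p == 1].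

Definition tau_set (alpha : T) : {set {perm T}} :=
  [set p : {perm T} | [forall z : T, p z == alpha * z]].
Definition sigma_set : {set {perm T}} :=
  [set p : {perm T} | [forall z : T, p z == z ^+ #|F|]].

Definition GammaL (alpha : T) : {set {perm T}} :=
  <<tau_set alpha :|: sigma_set>>%g.

Definition GammaL1 (alpha : T) : {set {perm T}} :=
  GammaL alpha :&: SLF.

End GammaL.

(* Let N(a) = det(z |-> a z) be the norm of L over F = F_q, so that N is
   multiplicative and N(c) = c^r for c in F.  The powers of the Frobenius map
   z |-> z^q are linearly independent (a nonzero polynomial of degree at most
   q^(r-1) cannot vanish on L), so its characteristic polynomial is X^r - 1 and
   its determinant is (-1)^(r-1) = 1.  Every element of GammaL(1,q^r) is
   z |-> b z^(q^i), with determinant N(b), and N(b z^(q^i)) = N(b) N(z); hence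
   N is constant on the orbits of GammaL_1(1,q^r).  If q > 2, N is not
   identically 1 on the nonzero elements: otherwise c^r = 1 on F^*, so q - 1
   divides r, while for a outside F the polynomial c |-> N(c - a) - 1, of degree
   r, vanishes on F, so q <= r.  If q = 2, every z |-> alpha^k z has
   determinant 1, so the powers of tau alone act transitively. *)

From Pilot Require Import Defs.
From HB Require Import structures.
From mathcomp Require Import all_boot all_order all_algebra all_fingroup all_field.
From mathcomp Require Import all_solvable.
Set Implicit Arguments. Unset Strict Implicit. Unset Printing Implicit Defensive.
Import GRing.Theory FalgLfun passmx.
Local Open Scope ring_scope.

Lemma horner_char_poly (R : comNzRingType) n (A : 'M[R]_n) a :
  (char_poly A).[a] = \det (a%:M - A).
Proof.
rewrite horner_sum; apply: eq_bigr => s _.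
rewrite hornerM horner_exp !hornerE; congr (_ * _).
rewrite (big_morph _ (fun p q => hornerM p q a) (hornerC 1 a)).
by apply: eq_bigr => i _; rewrite !mxE !(hornerE, hornerMn).
Qed.

Lemma char_poly_cyclic (R : comNzRingType) n (A : 'M[R]_n.+1) :
    A ^+ n.+1 = 1 ->
    (forall p : {poly R}, (size p <= n.+1)%N -> horner_mx A p = 0 -> p = 0) ->
  char_poly A = 'X^(n.+1) - 1.
Proof.
move=> An1 indepA; apply/eqP; rewrite -subr_eq0; apply/eqP/indepA.
  apply/leq_sizeP => j; rewrite leq_eqVlt => /predU1P[<- | lt_n1_j].
    have /monicP := char_poly_monic A; rewrite lead_coefE size_char_poly /=.
    by rewrite !coefB coefXn coef1 eqxx subr0 => ->; rewrite subrr.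
  rewrite !coefB coefXn coef1 nth_default ?size_char_poly //.
  by rewrite (gtn_eqF lt_n1_j) (gtn_eqF (ltn_trans _ lt_n1_j)) // !subrr.
rewrite !rmorphB /= Cayley_Hamilton rmorphXn /= horner_mx_X rmorph1 An1.
by rewrite !subrr.
Qed.

Lemma det_cyclic (R : comNzRingType) n (A : 'M[R]_n) :
    A ^+ n = 1 ->
    (forall c : nat -> R, \sum_(i < n) c i *: A ^+ i = 0 ->
       forall i, (i < n)%N -> c i = 0) ->
  \det A = (-1) ^+ n.-1.
Proof.
case: n A => [|n] A An1 indepA; first by rewrite det_mx00.
have charA : char_poly A = 'X^(n.+1) - 1.
  apply: char_poly_cyclic => // p size_p pA0; apply/polyP => i; rewrite coef0.
  have [lt_i_n1|] := ltnP i n.+1; last by move/(leq_trans size_p)/leq_sizeP; apply.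
  apply: (indepA (fun j => p`_j)) lt_i_n1; apply: etrans pA0.
  rewrite -[p in RHS](take_poly_id size_p) /take_poly poly_def rmorph_sum /=.
  by apply: eq_bigr => j _; rewrite horner_mxZ rmorphXn /= horner_mx_X.
have := char_poly_det A; rewrite charA coefB coefXn coef1 eqxx sub0r exprS mulN1r.
by rewrite mulNr => /oppr_inj detA; rewrite -[\det A](signrMK n) -detA mulr1.
Qed.

Section EndomorphismDeterminant.
Variables (F : fieldType) (A : falgType F).
Local Notation e := (vbasis {:A}).

(* In the ring 'End(A) of FalgLfun, [f * g] is [g \o f]. *)
Fact mxof_is_monoid_morphism : monoid_morphism (mxof e e).
Proof.
split; first by rewrite mxof1 // (basis_free (vbasisP _)).
by move=> f g; rewrite -lfun_compE (@mxof_comp _ _ _ _ e e e (vbasisP _)).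
Qed.
HB.instance Definition _ := GRing.isMonoidMorphism.Build 'End(A) 'M[F]_(\dim {:A})
  (mxof e e) mxof_is_monoid_morphism.

Definition ldet (f : 'End(A)) : F := \det (mxof e e f).

Lemma ldet1 : ldet 1 = 1.
Proof. by rewrite /ldet rmorph1 det1. Qed.

Lemma ldetM f g : ldet (f * g) = ldet f * ldet g.
Proof. by rewrite /ldet rmorphM det_mulmx. Qed.

Lemma ldetXn f k : ldet (f ^+ k) = ldet f ^+ k.
Proof. by elim: k => [|k IHk]; rewrite ?ldet1 // !exprS ldetM IHk. Qed.

Definition lnorm (a : A) : F := ldet (amulr a).

Lemma lnorm1 : lnorm 1 = 1.
Proof. by rewrite /lnorm rmorph1 ldet1. Qed.

Lemma lnormM a b : lnorm (a * b) = lnorm a * lnorm b.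
Proof. by rewrite /lnorm rmorphM ldetM. Qed.

Lemma lnormXn a k : lnorm (a ^+ k) = lnorm a ^+ k.
Proof. by rewrite /lnorm rmorphXn ldetXn. Qed.

Lemma lnorm_scalar c : lnorm c%:A = c ^+ \dim {:A}.
Proof. by rewrite /lnorm /ldet !linearZ /= !rmorph1 scalemx1 det_scalar. Qed.

Lemma lnorm_unit a : a \is a GRing.unit -> lnorm a != 0.
Proof.
move=> Ua; apply/eqP => a0; have := lnorm1.
by rewrite -(mulrV Ua) lnormM a0 mul0r => /esym/eqP; rewrite oner_eq0.
Qed.

Lemma horner_char_poly_amulr a c :
  (char_poly (mxof e e (amulr a))).[c] = lnorm (c%:A - a).
Proof.
by rewrite horner_char_poly /lnorm /ldet !linearB !linearZ /= !rmorph1 scalemx1.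
Qed.

End EndomorphismDeterminant.

Lemma finField_poly_eq0 (K : finFieldType) (p : {poly K}) :
  (size p <= #|K|)%N -> (forall x, p.[x] = 0) -> p = 0.
Proof.
move=> size_p p0; apply: contraTeq size_p => p_neq0; rewrite -ltnNge cardE.
by apply: max_poly_roots p_neq0 _ (enum_uniq _); apply/allP => x _; apply/rootP.
Qed.

Section Frobenius.
Variables (F : finFieldType) (L : fieldExtType F).
Local Notation q := #|F|.
Local Notation n := (\dim {:L}).
Local Notation T := (finvect_type L).

Lemma card_finvect : #|T| = (q ^ n)%N.
Proof. by rewrite -(card_vspacef (Vector.class T)) card_vspace. Qed.

Lemma expf_card_dim (z : L) : z ^+ (q ^ n) = z.
Proof. by rewrite -card_finvect; apply: (@expf_card T). Qed.

Lemma expf_cardXn (c : F) i : c ^+ (q ^ i) = c.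
Proof. by elim: i => [|i IHi]; rewrite ?expr1 // expnSr exprM IHi expf_card. Qed.

Definition frobenius_map (z : L) : L := z ^+ q.

Fact frobenius_map_is_linear : linear frobenius_map.
Proof.
rewrite /frobenius_map => a x y; have [p _ pcharF] := finPcharP F.
have pchar_q : [pchar L].-nat q.
  rewrite (eq_pnat _ (pchar_lalg L)) (eq_pnat _ (pcharf_eq pcharF)).
  by rewrite (card_pprimeChar pcharF) pnatX pnat_id ?(pcharf_prime pcharF).
by rewrite exprDn_pchar // exprZn expf_card.
Qed.
HB.instance Definition _ := GRing.isSemilinear.Build F L L _ frobenius_map
  (GRing.semilinear_linear frobenius_map_is_linear).

Definition frobenius : 'End(L) := linfun frobenius_map.

Lemma frobeniusXnE i z : (frobenius ^+ i) z = z ^+ (q ^ i).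
Proof.
elim: i => [|i IHi]; first by rewrite expr0 id_lfunE expr1.
by rewrite exprSr lfun_mulE lfunE /= IHi expnSr exprM.
Qed.

Lemma frobeniusXn_dim : frobenius ^+ n = 1.
Proof. by apply/lfunP => z; rewrite frobeniusXnE expf_card_dim id_lfunE. Qed.

Lemma frobenius_powers_free (c : nat -> F) :
    (forall z : L, \sum_(i < n) c i *: z ^+ (q ^ i) = 0) ->
  forall i, (i < n)%N -> c i = 0.
Proof.
move=> c_ann i lt_i_n; pose Q : {poly T} := \sum_(j < n) (c j)%:A *: 'X^(q ^ j).
have q_gt1 := finNzRing_gt1 F.
have Q0 : Q = 0.
  apply: finField_poly_eq0 => [|z]; last first.
    rewrite horner_sum -[RHS](c_ann z); apply: eq_bigr => j _.
    by rewrite hornerZ hornerXn mulr_algl.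
  rewrite card_finvect; apply/leq_sizeP => k le_qn_k; rewrite coef_sum big1 // => j _.
  by rewrite coefZ coefXn gtn_eqF ?mulr0 // (leq_trans _ le_qn_k) // ltn_exp2l.
apply/eqP; rewrite -(fmorph_eq0 (in_alg T)) -[X in X == 0]mulr1.
have := congr1 (fun P : {poly T} => P`_(q ^ i)) Q0; rewrite coef0 coef_sum.
rewrite (bigD1 (Ordinal lt_i_n)) //= coefZ coefXn eqxx big1 ?addr0 => [->|j ne_j_i] //.
by rewrite coefZ coefXn eqn_exp2l // eq_sym (negPf (ne_j_i : j != i :> nat)) mulr0.
Qed.

Lemma ldet_frobenius : ldet frobenius = (-1) ^+ n.-1.
Proof.
apply: det_cyclic => [|c]; first by rewrite -rmorphXn frobeniusXn_dim rmorph1.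
under eq_bigr do rewrite -rmorphXn -linearZ.
rewrite -linear_sum => /eqP; rewrite mxof_eq0 ?vbasisP // => /eqP c_ann.
apply: frobenius_powers_free => z; have /lfunP/(_ z) := c_ann.
by rewrite sum_lfunE zero_lfunE; under eq_bigr do rewrite scale_lfunE frobeniusXnE.
Qed.

End Frobenius.

Lemma eq_linfun (R : nzRingType) (aT rT : vectType R) (f g : aT -> rT) :
  f =1 g -> linfun f = linfun g.
Proof.
by move=> fg; rewrite unlock; congr Hom; apply/matrixP => i j; rewrite !mxE /= fg.
Qed.

Section SemilinearMonomials.
Variables (F : finFieldType) (L : fieldExtType F).
Local Notation q := #|F|.
Local Notation n := (\dim {:L}).
Local Notation T := (finvect_type L).

Lemma expf_card_mod (z : L) k : z ^+ (q ^ k) = z ^+ (q ^ (k %% n)).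
Proof.
rewrite {1}(divn_eq k n) [(_ * n)%N]mulnC expnD expnM exprM; congr (_ ^+ _).
by elim: (k %/ n)%N => [|t IHt]; rewrite ?expr1 // expnS exprM expf_card_dim IHt.
Qed.

Definition monomial_perms : {set {perm T}} :=
  [set p : {perm T} | [exists b : T, [exists i : 'I_n, [forall z, p z == b * z ^+ (q ^ i)]]]].

Lemma monomial_permsP (p : {perm T}) :
  reflect (exists b i, forall z, p z = b * z ^+ (q ^ i)) (p \in monomial_perms).
Proof.
apply: (iffP idP) => [|[b [i pE]]].
  by rewrite inE => /existsP[b /existsP[i /forallP pE]]; exists b, i => z; apply/eqP.
rewrite inE; apply/existsP; exists b; apply/existsP.
exists (Ordinal (ltn_pmod i (adim_gt0 {:L}%AS))); apply/forallP => z.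
by rewrite pE -expf_card_mod.
Qed.

Lemma monomial_perms_group_set : group_set monomial_perms.
Proof.
apply/group_setP; split.
  by apply/monomial_permsP; exists 1, 0%N => z; rewrite perm1 expr1 mul1r.
move=> p1 p2 /monomial_permsP[b1 [i p1E]] /monomial_permsP[b2 [j p2E]].
apply/monomial_permsP; exists (b2 * b1 ^+ (q ^ j)), (i + j)%N => z.
by rewrite permM p1E p2E exprMn -exprM -expnD mulrA.
Qed.
Canonical monomial_perms_group := Group monomial_perms_group_set.

Lemma GammaL_sub_monomial_perms alpha : GammaL alpha \subset monomial_perms.
Proof.
rewrite gen_subG; apply/subsetP => p /setUP[]; rewrite inE => /forallP pE.
  by apply/monomial_permsP; exists alpha, 0%N => z; rewrite expr1; apply/eqP.
by apply/monomial_permsP; exists 1, 1%N => z; rewrite expn1 mul1r; apply/eqP.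
Qed.

Lemma det_perm_monomial (p : {perm T}) b i :
  (forall z, p z = b * z ^+ (q ^ i)) -> Defs.det_perm p = lnorm b * ldet (frobenius L) ^+ i.
Proof.
move=> pE; rewrite /Defs.det_perm (@eq_linfun _ _ _ _ (frobenius L ^+ i * amulr b)).
  by rewrite fun_of_lfunK -/(ldet _) ldetM ldetXn mulrC.
by move=> z; rewrite lfun_mulE lfunE /= frobeniusXnE pE mulrC.
Qed.

Lemma lnorm_monomial_perm p x :
  odd n -> p \in monomial_perms -> lnorm (p x : L) = Defs.det_perm p * lnorm (x : L).
Proof.
move=> odd_n /monomial_permsP[b [i pE]]; rewrite (det_perm_monomial pE).
have -> : ldet (frobenius L) = 1.
  by rewrite ldet_frobenius -signr_odd; case: (\dim {:L}) odd_n => //= k /negPf ->.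
by rewrite expr1n mulr1 pE lnormM lnormXn expf_cardXn.
Qed.

Lemma lnorm_GammaL1 alpha g x :
  odd n -> g \in GammaL1 alpha -> lnorm (g x : L) = lnorm (x : L).
Proof.
move=> odd_n; rewrite inE => /andP[/(subsetP (GammaL_sub_monomial_perms alpha)) Mg].
by rewrite inE => /andP[_ /eqP detg1]; rewrite lnorm_monomial_perm // detg1 mul1r.
Qed.

End SemilinearMonomials.

Lemma expf_card_pred (K : finFieldType) (c : K) : c != 0 -> c ^+ #|K|.-1 = 1.
Proof.
move=> c_neq0; apply: (mulIf c_neq0).
by rewrite mul1r -exprSr prednK ?expf_card // ltnW ?finNzRing_gt1.
Qed.

Lemma finField_exponent_dvd (K : finFieldType) k :
  (forall c : K, c != 0 -> c ^+ k = 1) -> (#|K|.-1 %| k)%N.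
Proof.
move=> ck1; have : has (#|K|.-1).-primitive_root (enum (predC1 (0 : K))).
  apply: has_prim_root; last by rewrite -cardE cardC1.
  - by rewrite -ltnS prednK ?finNzRing_gt1 // ltnW ?finNzRing_gt1.
  - by apply/allP => c; rewrite mem_enum unity_rootE => /expf_card_pred ->.
  - exact: enum_uniq.
by case/hasP => g; rewrite mem_enum => /ck1 gk1 /prim_order_dvd ->; rewrite gk1.
Qed.

Section NontrivialNorm.
Variables (F : finFieldType) (L : fieldExtType F).
Local Notation q := #|F|.
Local Notation n := (\dim {:L}).

Lemma card_le_dim_of_trivial_lnorm :
  (1 < n)%N -> (forall a : L, a != 0 -> lnorm a = 1) -> (q <= n)%N.
Proof.
move=> n_gt1 lnorm1_nz.
have /subvPn[a _ a_notin_F] : ~~ ({:L} <= 1)%VS.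
  by apply: contraL n_gt1 => /dimvS; rewrite dimv1 -leqNgt.
pose P := char_poly (mxof (vbasis {:L}) (vbasis {:L}) (amulr a)) - 1.
have size_P : size P = n.+1.
  by rewrite size_polyDl size_char_poly // size_polyN size_poly1 ltnS ltnW.
rewrite leqNgt; apply/negP => lt_n_q.
suff P0 : P = 0 by move: size_P; rewrite P0 size_poly0.
apply: finField_poly_eq0 => [|c]; first by rewrite size_P.
rewrite hornerD hornerN hornerC horner_char_poly_amulr lnorm1_nz ?subrr //.
by apply: contraNneq a_notin_F => /subr0_eq <-; rewrite rpredZ ?mem1v.
Qed.

Lemma lnorm_nontrivial :
  prime n -> (2 < q)%N -> exists2 a : L, a != 0 & lnorm a != 1.
Proof.
move=> n_prime q_gt2.
have [/existsP[a /andP[a_neq0 na_neq1]]|] :=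
  boolP [exists a : finvect_type L, (a != 0) && (lnorm (a : L) != 1)].
  by exists a.
rewrite negb_exists => /forallP lnorm_triv.
have lnorm1_nz (a : L) : a != 0 -> lnorm a = 1.
  by move=> a_neq0; apply/eqP; have := lnorm_triv a; rewrite a_neq0 negbK.
have q_le_n := card_le_dim_of_trivial_lnorm (prime_gt1 n_prime) lnorm1_nz.
have q_gt0 : (0 < q)%N by apply: ltn_trans q_gt2.
have q1_neq1 : q.-1 != 1%N by rewrite -(inj_eq succn_inj) prednK // gtn_eqF.
have q1_eq_n : q.-1 = n.
  apply/(prime_nt_dvdP n_prime q1_neq1)/finField_exponent_dvd => c c_neq0.
  by rewrite -lnorm_scalar lnorm1_nz // scaler_eq0 oner_eq0 orbF.
by move: q_le_n; rewrite -q1_eq_n leqNgt ltn_predL q_gt0.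
Qed.

End NontrivialNorm.

Lemma GammaL1_intransitive (F : finFieldType) (L : fieldExtType F) alpha :
    prime (\dim {:L}) -> odd (\dim {:L}) -> (2 < #|F|)%N ->
  ~~ [transitive GammaL1 alpha, on [set~ (0 : finvect_type L)] | 'P].
Proof.
move=> n_prime n_odd q_gt2; apply/negP => /imsetP[x0 _ S_orbit].
have lnorm_orbit (y : finvect_type L) : y \in [set~ 0] -> lnorm (y : L) = lnorm (x0 : L).
  by rewrite S_orbit => /orbitP[g /lnorm_GammaL1 lnorm_g <-]; apply: lnorm_g.
have [a a_neq0 lnorm_a_neq1] := lnorm_nontrivial n_prime q_gt2.
have [S1 Sa] : (1 : finvect_type L) \in [set~ 0] /\ (a : finvect_type L) \in [set~ 0].
  by rewrite !inE oner_neq0.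
by move: lnorm_a_neq1; rewrite (lnorm_orbit _ Sa) -(lnorm_orbit _ S1) lnorm1 eqxx.
Qed.

Section TwoElementField.
Variables (F : finFieldType) (L : fieldExtType F).
Hypothesis card_F : #|F| = 2%N.
Local Notation T := (finvect_type L).

Lemma mulr_perm_in_SLF (p : {perm T}) (b : L) :
  b != 0 -> (forall z, p z = b * z) -> p \in SLF L.
Proof.
move=> b_neq0 pE; rewrite !inE; apply/andP; split.
  by apply/forallP => c; apply/forallP => x; apply/forallP => y; rewrite !pE mulrDr -scalerAr.
rewrite (@det_perm_monomial _ _ p b 0) => [|z]; last by rewrite expr1 pE.
have /expf_card_pred : lnorm b != 0 by apply: lnorm_unit; rewrite unitfE.
by rewrite card_F expr1 expr0 mulr1 => ->.
Qed.

Lemma expg_mulf_perm (b : T) (b_neq0 : b != 0) k z :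
  (perm (mulfI b_neq0) ^+ k)%g z = b ^+ k * z.
Proof.
rewrite permX; elim: k => [|k IHk] /=; first by rewrite mul1r.
by rewrite IHk permE exprS mulrA.
Qed.

Lemma GammaL1_transitive alpha : (#|T|.-1).-primitive_root alpha ->
  [transitive GammaL1 alpha, on [set~ (0 : T)] | 'P].
Proof.
move=> alpha_prim; have T_gt1 := finNzRing_gt1 T.
have alpha_neq0 : alpha != 0.
  by rewrite (prim_root_eq0 alpha_prim) -lt0n -ltnS prednK // ltnW.
apply/imsetP; exists 1; first by rewrite !inE oner_neq0.
apply/setP => z; rewrite !inE; apply/idP/idP => [z_neq0 | /orbitP[g]].
  have [k ->] := prim_rootP alpha_prim (expf_card_pred z_neq0).
  apply/orbitP; exists (perm (mulfI alpha_neq0) ^+ k)%g; last first.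
    exact: etrans (expg_mulf_perm _ _ _) (mulr1 _).
  apply/setIP; split; last first.
    exact: mulr_perm_in_SLF (expf_neq0 k alpha_neq0) (expg_mulf_perm alpha_neq0 k).
  apply/groupX/mem_gen; rewrite !inE; apply/orP; left.
  by apply/forallP => w; rewrite permE.
case/setIP => _; rewrite !inE => /andP[/forallP g_lin _] <-.
have g0 : g 0 = 0.
  apply/(addIr (g 0)); have /forallP/(_ 0)/forallP/(_ 0)/eqP := g_lin 1.
  by rewrite !scale1r !addr0 add0r => <-.
by rewrite /= -g0 (inj_eq perm_inj) oner_neq0.
Qed.

End TwoElementField.

Unset Implicit Arguments.

Theorem lemma3p3 (m r : nat) (F : finFieldType) (L : fieldExtType F)
    (alpha : finvect_type L) :
  prime r -> odd r -> (0 < m)%N -> #|F| = (2 ^ m)%N -> \dim {:L} = r ->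
  (#|finvect_type L|.-1).-primitive_root alpha ->
  [transitive GammaL1 alpha, on [set~ (0 : finvect_type L)] | 'P] <->
  #|F| = 2%N.
Proof.
move=> r_prime r_odd _ _ dimL alpha_prim; subst r.
split=> [GammaL1_trans | card_F]; last exact: GammaL1_transitive.
apply/eqP; apply: contraTT GammaL1_trans => q_neq2.
by apply: GammaL1_intransitive; rewrite // ltn_neqAle eq_sym q_neq2 finNzRing_gt1.
Qed.
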